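(* Let $A$ be a bivariate copula and $K_A$ a version of its Markov kernel such that the function $(x,y)\mapsto K_A(x,[0,y])$ on $[0,1]^2$ has a discontinuity. Then the sequence $(\Delta_N)_{N\in\mathbb{N}}$ given by $$\Delta_N:=\sup_{(x,y)\in[0,1]^2}\left|K_{\mathcal{CB}_N(A)}(x,[0,y])-K_A(x,[0,y])\right|$$ does not converge to $0$ as $N\to\infty$.
   Context: A (bivariate) copula is a distribution function on $[0,1]^2$ with uniform marginals; each copula $B$ corresponds to a doubly stochastic measure $\mu_B$ with $B(x,y)=\mu_B([0,x]\times[0,y])$. A Markov kernel of $B$ is a map $K_B:[0,1]\times\mathcal{B}([0,1])\to[0,1]$, measurable in the first argument, a probability measure in the second, with $\int_{E_1}K_B(x,E_2)\,d\lambda(x)=\mu_B(E_1\times E_2)$ for all Borel $E_1,E_2$ ($\lambda$ = Lebesgue measure). Checkerboard approximation: $I_1^N=[0,\tfrac1N]$, $I_i^N=(\tfrac{i-1}N,\tfrac iN]$ ($i=2,\dots,N$), $Q_{i,j}^N=I_i^N\times I_j^N$; $\mathcal{CB}_N(A)$ is the absolutely continuous copula with density $N^2\sum_{i,j=1}^N\mu_A(Q^N_{i,j})\mathbf 1_{Q^N_{i,j}}$, and its Markov kernel is the version $K_{\mathcal{CB}_N(A)}(x,[0,y])=N^2\sum_{i,j=1}^N\mu_A(Q^N_{i,j})\mathbf 1_{I^N_i}(x)\,\lambda([0,y]\cap I^N_j)$. *)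

From HB Require Import structures.
From mathcomp Require Import all_boot all_order all_algebra.
From mathcomp Require Import all_classical all_reals all_analysis measurable_realfun.
Set Implicit Arguments. Unset Strict Implicit. Unset Printing Implicit Defensive.
Import Order.TTheory GRing.Theory Num.Theory.
Import numFieldNormedType.Exports.
Local Open Scope classical_set_scope.
Local Open Scope ring_scope.

Section CopulaDefs.
Context {R : realType}.

Definition Icc (a b : R) : set R := [set` `[a, b]%R].
Definition Ioc (a b : R) : set R := [set` `]a, b]%R].

Definition unit_sq : set (R * R) := (Icc 0 1) `*` (Icc 0 1).

Definition is_copula (A : R -> R -> R) : Prop :=
  (forall x, 0 <= x <= 1 ->
     [/\ A x 0 = 0, A 0 x = 0, A x 1 = x & A 1 x = x]) /\
  (forall x1 x2 y1 y2, 0 <= x1 -> x1 <= x2 -> x2 <= 1 ->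
     0 <= y1 -> y1 <= y2 -> y2 <= 1 ->
     0 <= A x2 y2 - A x1 y2 - A x2 y1 + A x1 y1).

(** [mu] is the doubly stochastic measure mu_A of the copula A (extended by
    zero outside [0,1]^2): B(x,y) = mu([0,x] x [0,y]) *)
Definition is_copula_measure (A : R -> R -> R)
    (mu : set (R * R) -> \bar R) : Prop :=
  mu (~` unit_sq) = 0%E /\
  (forall x y, 0 <= x <= 1 -> 0 <= y <= 1 ->
     mu ((Icc 0 x) `*` (Icc 0 y)) = (A x y)%:E).

Definition is_markov_kernel (mu : set (R * R) -> \bar R)
    (K : R -> probability R R) : Prop :=
  [/\ (forall x, 0 <= x <= 1 -> K x (Icc 0 1) = 1%E),
      (forall E : set R, measurable E ->
         measurable_fun (Icc 0 1) (fun x => K x E)) &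
      (forall E1 E2 : set R, measurable E1 -> measurable E2 ->
         E1 `<=` (Icc 0 1) -> E2 `<=` (Icc 0 1) ->
         (\int[lebesgue_measure]_(x in E1) K x E2 = mu (E1 `*` E2))%E)].

(** I_i^N, i = 1..N *)
Definition cb_int (N i : nat) : set R :=
  if i == 1%N then (Icc 0 N%:R^-1)
  else Ioc ((i.-1)%:R / N%:R) (i%:R / N%:R).

(** the given version of the Markov kernel of CB_N(A):
    K(x,[0,y]) = N^2 sum_{i,j} mu(Q_ij) 1_{I_i}(x) lambda([0,y] /\ I_j) *)
Definition cb_kernel (mu : set (R * R) -> \bar R) (N : nat) (x y : R) : R :=
  N%:R ^+ 2 * \sum_(1 <= i < N.+1) \sum_(1 <= j < N.+1)
     (fine (mu (cb_int N i `*` cb_int N j)) * \1_(cb_int N i) x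
      * fine (lebesgue_measure ((Icc 0 y) `&` cb_int N j))).

Definition cb_Delta (mu : set (R * R) -> \bar R) (K : R -> probability R R)
    (N : nat) : R :=
  sup [set `| cb_kernel mu N p.1 p.2 - fine (K p.1 (Icc 0 p.2)) | | p in unit_sq].

End CopulaDefs.

(* If Delta_N -> 0, then (x, y) |-> K_A(x, [0, y]) is a uniform limit on [0,1]^2 of
   the checkerboard kernels, so it is continuous at (a, b) as soon as infinitely many
   checkerboard kernels are. Each of them is Lipschitz in y, because
   y |-> lambda([0, y] /\ I_j) is, and is a step function of x jumping only at the
   interior grid points k/N. Since k/N = k'/(N+1) is impossible for 0 < k < N, every a
   avoids the grid of N or of N+1, and for that grid the kernel is locally constant in x
   around a. *)
From HB Require Import structures.
From mathcomp Require Import all_boot all_order all_algebra.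
From mathcomp Require Import all_classical all_reals all_analysis measurable_realfun.
From mathcomp Require Import zify lra.
Set Implicit Arguments. Unset Strict Implicit. Unset Printing Implicit Defensive.
Import Order.TTheory GRing.Theory Num.Theory.
Import numFieldNormedType.Exports.
Local Open Scope classical_set_scope.
Local Open Scope ring_scope.

Lemma cvg_within_uniform_approx (R : realFieldType) (T : topologicalType)
    (D : set T) (p : T) (f : T -> R) : D p ->
  (forall e, 0 < e -> exists2 g : T -> R,
     (forall q, D q -> `|g q - f q| < e) & g @ within D (nbhs p) --> g p) ->
  f @ within D (nbhs p) --> f p.
Proof.
move=> Dp approx; apply/cvgrPdist_lt => e e0.
have e30 : 0 < e / 3 by rewrite divr_gt0.
have [g gf /cvgrPdist_lt/(_ _ e30) gp] := approx _ e30.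
move: gp; rewrite !near_withinE; apply: filterS => q gpq Dq.
have -> : f p - f q = - (g p - f p) + (g p - g q) + (g q - f q).
  by rewrite opprB !addrA !subrK.
have := gf _ Dp; have := gf _ Dq; have := gpq Dq.
move: (g p - f p) (g p - g q) (g q - f q) => u v w hv hw hu.
have := ler_normD (- u + v) w; have := ler_normD (- u) v; rewrite normrN; lra.
Qed.

Section truncated_lebesgue.
Context {R : realType}.
Local Notation lam := (@lebesgue_measure R).
Variable S : set R.
Hypothesis mS : measurable S.

Lemma lebesgue_measure_bnd_itv (a b : R) (b0 b1 : bool) : a <= b ->
  lam [set` Interval (BSide b0 a) (BSide b1 b)] = (b - a)%:E.
Proof.
by move=> ab; rewrite lebesgue_measure_itv /= lte_fin; case: ltgtP ab => // ->; rewrite subrr.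
Qed.

Lemma lebesgue_itvI_le (a b : R) (b0 b1 : bool) : a <= b ->
  (lam ([set` Interval (BSide b0 a) (BSide b1 b)] `&` S) <= (b - a)%:E)%E.
Proof.
move=> ab; rewrite -(lebesgue_measure_bnd_itv b0 b1 ab).
by apply: le_measure; rewrite ?inE; [exact: measurableI (measurable_itv _) mS|
  exact: measurable_itv|exact: subIsetl].
Qed.

Lemma lebesgue_Icc0I_fin_num y : 0 <= y -> lam (Icc 0 y `&` S) \is a fin_num.
Proof.
move=> y0; rewrite ge0_fin_numE ?measure_ge0 //.
by apply: le_lt_trans (ltry (y - 0)); exact: lebesgue_itvI_le.
Qed.

Lemma fine_lebesgue_Icc00I : fine (lam (Icc 0 0 `&` S)) = 0.
Proof.
have := lebesgue_itvI_le true false (lexx (0 : R)); rewrite subrr => le0.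
by apply/eqP; rewrite eq_le fine_ge0 ?measure_ge0 // andbT -lee_fin fineK ?lebesgue_Icc0I_fin_num.
Qed.

Lemma lebesgue_Icc0I_le_add y y' : 0 <= y -> y <= y' ->
  (lam (Icc 0 y' `&` S) <= lam (Icc 0 y `&` S) + (y' - y)%:E)%E.
Proof.
move=> y0 yy'.
have -> : Icc 0 y' `&` S = (Icc 0 y `&` S) `|` (Ioc y y' `&` S).
  by rewrite -setIUl /Icc /Ioc -itv_bndbnd_setU // bnd_simp.
apply: le_trans (measureU2 _ _ _) _; try exact: measurableI (measurable_itv _) mS.
by apply: leeD2l; exact: lebesgue_itvI_le.
Qed.

Lemma fine_lebesgue_Icc0I_lipschitz y y' : 0 <= y -> 0 <= y' ->
  `|fine (lam (Icc 0 y `&` S)) - fine (lam (Icc 0 y' `&` S))| <= `|y - y'|.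
Proof.
wlog yy' : y y' / y <= y'.
  move=> h y0 y'0; have [yy'|/ltW y'y] := leP y y'; first exact: h.
  by rewrite distrC [`|y - _|]distrC; exact: h.
move=> y0 y'0; rewrite distrC [`|y - _|]distrC [leRHS]ger0_norm ?subr_ge0 //.
have fy := lebesgue_Icc0I_fin_num y0; have fy' := lebesgue_Icc0I_fin_num y'0.
have le_y_y' : (lam (Icc 0 y `&` S) <= lam (Icc 0 y' `&` S))%E.
  apply: le_measure; rewrite ?inE; try exact: measurableI (measurable_itv _) mS.
  by apply: setSI; rewrite /Icc => x /=; rewrite !in_itv /= => /andP[-> /le_trans->].
rewrite ger0_norm ?subr_ge0; last exact: fine_le.
rewrite lerBlDl -lee_fin EFinD !fineK //.
exact: lebesgue_Icc0I_le_add.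
Qed.

End truncated_lebesgue.

Section grid.
Context {R : realType}.

Definition grid_point (N : nat) (x : R) : Prop :=
  exists2 k, (0 < k < N)%N & x = k%:R / N%:R.

Lemma grid_point_succ N x : grid_point N x -> ~ grid_point N.+1 x.
Proof.
move=> [k /andP[k0 kN] ->] [k' /andP[k'0 k'N]] ekk'.
have e : (k * N.+1 = k' * N)%N.
  have N0 : (0 < N)%N := ltn_trans k0 kN.
  by apply/eqP; rewrite -(eqr_nat R) !natrM -eqr_div ?pnatr_eq0 -?lt0n //; exact/eqP.
have [k'k|kk'] := leqP k' k.
  by have := leq_mul k'k (leqnn N); rewrite -e; lia.
by have := leq_mul kk' (leqnn N); rewrite -e; lia.
Qed.

Lemma exists_off_grid N0 x : exists2 M, (N0 <= M)%N & ~ grid_point M x.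
Proof.
have [gN0|ngN0] := pselect (grid_point N0 x); last by exists N0.
by exists N0.+1 => //; exact: grid_point_succ.
Qed.

Lemma nbhs_le_eq (c x0 : R) : x0 != c -> \forall x \near x0, (x <= c) = (x0 <= c).
Proof.
case: ltgtP => // [x0c|cx0] _; near=> x.
  by apply/ltW; near: x; exact: lt_nbhsl.
by rewrite leNgt; apply/negbF; near: x; exact: lt_nbhsr.
Unshelve. all: by end_near. Qed.

Lemma le_grid_near N k x0 : (0 < k <= N)%N -> x0 <= 1 -> ~ grid_point N x0 ->
  \forall x \near x0, x <= 1 -> (x <= k%:R / N%:R) = (x0 <= k%:R / N%:R).
Proof.
move=> /andP[k0 kN] x01 x0_off; have N0 : (0 < N)%N := leq_trans k0 kN.
move: kN; rewrite leq_eqVlt => /predU1P[->|kltN].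
  apply: filterE => x x1; rewrite mulfV ?pnatr_eq0 -?lt0n //.
  by apply/idP/idP => _.
have x0k : x0 != k%:R / N%:R.
  by apply/eqP => x0k; apply: x0_off; exists k; rewrite // k0.
by apply: filterS (nbhs_le_eq x0k) => x + _.
Qed.

Lemma le_grid_near_all N x0 : x0 <= 1 -> ~ grid_point N x0 ->
  \forall x \near x0, x <= 1 -> forall k, (0 < k <= N)%N ->
    (x <= k%:R / N%:R) = (x0 <= k%:R / N%:R).
Proof.
move=> x01 x0_off.
have : \forall x \near x0, forall k : 'I_N.+1, x <= 1 -> (0 < k <= N)%N ->
    (x <= k%:R / N%:R) = (x0 <= k%:R / N%:R).
  apply: (@filter_forall R 'I_N.+1 (fun (k : 'I_N.+1) x => x <= 1 -> (0 < k <= N)%N ->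
    (x <= k%:R / N%:R) = (x0 <= k%:R / N%:R)) (nbhs x0) _) => k.
  have [kN|_] := boolP (0 < k <= N)%N; last by apply: filterE.
  by apply: filterS (le_grid_near kN x01 x0_off) => x h x1 _; exact: h.
move=> hk; near=> x => x1 k kN.
have kN1 : (k < N.+1)%N by case/andP: kN.
exact: (near hk x) (Ordinal kN1) x1 kN.
Unshelve. all: by end_near. Qed.

Lemma in_cb_int N i (x : R) : 0 <= x ->
  (x \in cb_int N i) = if i == 1%N then x <= 1%:R / N%:R
                       else ~~ (x <= i.-1%:R / N%:R) && (x <= i%:R / N%:R).
Proof.
move=> x0; rewrite /cb_int; case: ifP => _;
  rewrite /Icc /Ioc mem_setE in_itv /= ?x0 ?mul1r //.
by rewrite ltNge.
Qed.

Lemma indic_cb_int_near N x0 : 0 <= x0 <= 1 -> ~ grid_point N x0 ->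
  \forall x \near x0, 0 <= x <= 1 -> forall i, (1 <= i <= N)%N ->
    \1_(cb_int N i) x = \1_(cb_int N i) x0 :> R.
Proof.
move=> /andP[x00 x01] x0_off.
apply: filterS (le_grid_near_all x01 x0_off) => x h /andP[x_ge0 /h {}h] i /andP[i1 iN].
rewrite !indicE !in_cb_int //.
case: eqP => [_|/eqP i_neq1]; first by rewrite (h 1%N) ?(leq_trans i1 iN).
by rewrite !h //; lia.
Qed.

End grid.

Lemma unit_sqP (R : realType) (q : R * R) :
  unit_sq q -> (0 <= q.1 <= 1) /\ (0 <= q.2 <= 1).
Proof. by case; rewrite /Icc /= !in_itv. Qed.

Section cb_kernel_regularity.
Context {R : realType}.
Variable mu : set (R * R) -> \bar R.
Variable N : nat.

Definition cb_lipconst : R :=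
  N%:R ^+ 2 * \sum_(1 <= i < N.+1) \sum_(1 <= j < N.+1)
     `|fine (mu (cb_int N i `*` cb_int N j))|.

Lemma cb_lipconst_ge0 : 0 <= cb_lipconst.
Proof. by rewrite mulr_ge0 ?exprn_ge0 //; do 2!apply: sumr_ge0 => ? _. Qed.

Lemma measurable_cb_int i : measurable (cb_int (R:=R) N i).
Proof. by rewrite /cb_int; case: ifP => _; exact: measurable_itv. Qed.

Lemma cb_kernel_lipschitz x y y' : 0 <= y -> 0 <= y' ->
  `|cb_kernel mu N x y - cb_kernel mu N x y'| <= cb_lipconst * `|y - y'|.
Proof.
move=> y0 y'0; rewrite /cb_kernel /cb_lipconst -mulrBr normrM -mulrA.
rewrite ger0_norm ?exprn_ge0 // ler_wpM2l ?exprn_ge0 // -sumrB mulr_suml.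
apply: le_trans (ler_norm_sum _ _ _) _; apply: ler_sum => i _.
rewrite -sumrB mulr_suml; apply: le_trans (ler_norm_sum _ _ _) _; apply: ler_sum => j _.
rewrite -mulrBr normrM ler_pM //.
  by rewrite normrM -[leRHS]mulr1 ler_wpM2l // indicE; case: (_ \in _); rewrite ?normr1 ?normr0.
exact: fine_lebesgue_Icc0I_lipschitz (measurable_cb_int j) _ _ y0 y'0.
Qed.

Lemma cb_kernel_abs_le x y : 0 <= y -> `|cb_kernel mu N x y| <= cb_lipconst * y.
Proof.
move=> y0; have := cb_kernel_lipschitz x y0 (lexx 0).
have -> : cb_kernel mu N x 0 = 0.
  rewrite /cb_kernel big1 ?mulr0 // => i _; rewrite big1 // => j _.
  by rewrite fine_lebesgue_Icc00I ?mulr0 //; exact: measurable_cb_int.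
by rewrite !subr0 (ger0_norm y0).
Qed.

Lemma cb_kernel_near_x x0 : 0 <= x0 <= 1 -> ~ grid_point N x0 ->
  \forall x \near x0, 0 <= x <= 1 -> forall y, cb_kernel mu N x y = cb_kernel mu N x0 y.
Proof.
move=> x01 x0_off; apply: filterS (indic_cb_int_near x01 x0_off) => x h x01' y.
rewrite /cb_kernel; congr (_ * _); apply: eq_big_nat => i iN.
by apply: eq_bigr => j _; rewrite h.
Qed.

Lemma cb_kernel_cvg_within (a b : R) : unit_sq (a, b) -> ~ grid_point N a ->
  (fun q : R * R => cb_kernel mu N q.1 q.2) @ within unit_sq (nbhs (a, b))
    --> cb_kernel mu N a b.
Proof.
move=> /unit_sqP[/= a01 /andP[b0 _]] a_off; apply/cvgrPdist_lt => e e0.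
have C1 : 0 < cb_lipconst + 1 by rewrite ltr_wpDl ?cb_lipconst_ge0.
have d0 : 0 < e / (cb_lipconst + 1) by rewrite divr_gt0.
have x_near : \forall q \near (a, b), 0 <= q.1 <= 1 ->
    forall y, cb_kernel mu N q.1 y = cb_kernel mu N a y.
  exact: (@cvg_fst _ _ (nbhs a) (nbhs b) _ _ (cb_kernel_near_x a01 a_off)).
have y_near : \forall q \near (a, b), `|b - q.2| < e / (cb_lipconst + 1).
  exact: (@cvgr_dist_lt _ _ _ (nbhs (a, b)) _ snd b cvg_snd _ d0).
rewrite near_withinE; apply: filterS2 x_near y_near => q xq yq /unit_sqP[/xq-> /andP[q2 _]].
apply: le_lt_trans (cb_kernel_lipschitz a b0 q2) _.
apply: (@le_lt_trans _ _ ((cb_lipconst + 1) * `|b - q.2|)).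
  by rewrite ler_wpM2r ?lerDl.
by rewrite mulrC -ltr_pdivlMr.
Qed.
End cb_kernel_regularity.

Lemma normr_fine_probability_le1 d (T : measurableType d) (R : realType)
    (P : probability T R) (A : set T) : measurable A -> `|fine (P A)| <= 1.
Proof.
move=> mA; have P_le1 := probability_le1 P mA.
have P_fin : P A \is a fin_num by rewrite ge0_fin_numE // (le_lt_trans P_le1) ?ltry.
by rewrite ger0_norm ?fine_ge0 // -lee_fin fineK //.
Qed.

Lemma cb_Delta_ge (R : realType) (mu : set (R * R) -> \bar R)
    (K : R -> probability R R) N (q : R * R) : unit_sq q ->
  `|cb_kernel mu N q.1 q.2 - fine (K q.1 (Icc 0 q.2))| <= cb_Delta mu K N.
Proof.
move=> Sq; apply: ub_le_sup; last by exists q.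
exists (cb_lipconst mu N + 1) => _ [q' /unit_sqP[_ /andP[q'2_ge0 q'2_le1]] <-].
apply: le_trans (ler_normB _ _) _; apply: lerD.
  apply: le_trans (cb_kernel_abs_le _ _ _ q'2_ge0) _.
  by rewrite ler_piMr ?cb_lipconst_ge0 ?q'2_le1.
exact: normr_fine_probability_le1 (measurable_itv _).
Qed.

Theorem proposition3p6 (R : realType) (A : R -> R -> R)
    (mu : {measure set (R * R) -> \bar R}) (K : R -> probability R R) :
  is_copula A -> is_copula_measure A mu -> is_markov_kernel mu K ->
  (exists p : R * R, unit_sq p /\
     ~ ((fun q : R * R => fine (K q.1 (Icc 0 q.2))) @ within unit_sq (nbhs p)
          --> fine (K p.1 (Icc 0 p.2)))) ->
  ~ (cb_Delta mu K @ \oo --> 0).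
Proof.
move=> _ _ _ [[a b] [Sab K_discont]] Delta_cvg0; apply: K_discont.
apply: (cvg_within_uniform_approx Sab) => e e0.
have [N0 _ Delta_lt] := (cvgrPdist_lt _ _).1 Delta_cvg0 _ e0.
have [M N0M a_off] := exists_off_grid N0 a.
exists (fun q : R * R => cb_kernel mu M q.1 q.2); last exact: cb_kernel_cvg_within.
move=> q Sq; apply: le_lt_trans (cb_Delta_ge mu K M Sq) _.
by have := Delta_lt M N0M; rewrite /= sub0r normrN; exact: le_lt_trans (ler_norm _).
Qed.
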